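(* In $(\lambda\beta\eta\pi* )'$, let $t$ be a term and $z^\top$ a variable of type $\top$ not occurring in $t$. Then (a) if $t$ is reducible, then $t[*^\top:=z^\top]$ is reducible; and (b) $t[*^\top:=z^\top]\stackrel{*}{\to} t$. In particular, if $t$ has atomic type and is SN, then $t[*^\top:=z^\top]$ is SN.
   Context: Types are built from a distinguished type constant $\top$ and type variables by means of $\varphi\times\psi$ and $\varphi\to\psi$; an atomic type is $\top$ or a type variable. Terms are simply typed (each variable carries its type): the term constant $*^\top$, variables $x^\varphi$, abstractions $(\lambda x^\varphi.t^\psi)^{\varphi\to\psi}$, applications $(u^{\varphi\to\psi}v^\varphi)^\psi$, pairs $\langle u^\varphi,v^\psi\rangle^{\varphi\times\psi}$, projections $(\pi_1 t^{\varphi\times\psi})^\varphi$, $(\pi_2 t^{\varphi\times\psi})^\psi$. Terms are identified up to renaming of bound variables, written $\equiv$; $\mathrm{FV}(t)$ is the set of free variables. The set $\mathit{Iso}(\top)$ is the least set of types containing $\top$, containing $\varphi\to\tau$ whenever $\tau\in\mathit{Iso}(\top)$ ($\varphi$ arbitrary), and containing $\tau_1\times\tau_2$ whenever $\tau_1,\tau_2\in\mathit{Iso}(\top)$. For $\tau\in\mathit{Iso}(\top)$ the canonical term $*^\tau$ is: $*^\top$ the constant; $*^{\varphi\to\tau}:=\lambda x^\varphi.*^\tau$; $*^{\tau_1\times\tau_2}:=\langle *^{\tau_1},*^{\tau_2}\rangle$ (writing $*^\varphi$ presupposes $\varphi\in\mathit{Iso}(\top)$). The one-step rewrite relation $\to$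 of $(\lambda\beta\eta\pi* )'$ is the closure under arbitrary term contexts of: $(\beta)$ $(\lambda x.u)v\to u[x:=v]$; $(\pi_1)$ $\pi_1\langle u,v\rangle\to u$; $(\pi_2)$ $\pi_2\langle u,v\rangle\to v$; $(\eta)$ $\lambda x.tx\to t$ if $x\notin\mathrm{FV}(t)$; $(SP)$ $\langle\pi_1u,\pi_2u\rangle\to u$; (gentop) $u^\tau\to *^\tau$ if $\tau\in\mathit{Iso}(\top)$ and $u\not\equiv *^\tau$; $(\eta_{top})$ $\lambda x^\tau.t\,*^\tau\to t$ if $\tau\in\mathit{Iso}(\top)$, $x\notin\mathrm{FV}(t)$; $(SP_{top}1)$ $\langle\pi_1u,*^\tau\rangle\to u$ for $u$ of type $\varphi\times\tau$, $\tau\in\mathit{Iso}(\top)$; $(SP_{top}2)$ $\langle *^\tau,\pi_2u\rangle\to u$ for $u$ of type $\tau\times\psi$, $\tau\in\mathit{Iso}(\top)$. $\stackrel{*}{\to}$ is the reflexive transitive closure. A term is SN if there is no infinite $\to$-sequence starting from it. For a term $t$ and a variable $z^\top$, $t[*^\top:=z^\top]$ denotes the term obtained by replacing every occurrence of the constant $*^\top$ in $t$ by $z^\top$. Reducibility is defined by induction on types: a term of atomic type is reducible iff it is SN; a term $t$ of type $\varphi\times\psi$ is reducible iff $\pi_1t$ and $\pi_2t$ are reducible; a term $t$ of type $\varphi\to\psi$ is reducible iff $tu$ is reducible for every reducible term $u$ of type $\varphi$. *)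

From Stdlib Require Import List Relations.
Import ListNotations.

Inductive ty : Type :=
| Top : ty
| TV : nat -> ty
| Arr : ty -> ty -> ty
| Prod : ty -> ty -> ty.

Definition atomic (A : ty) : Prop :=
  match A with Top | TV _ => True | _ => False end.

Inductive var : list ty -> ty -> Type :=
| ZZ {G : list ty} {A : ty} : var (A :: G) A
| SS {G : list ty} {A B : ty} : var G A -> var (B :: G) A.

(* Free variables x^A are named globally: [fvar n A] is the
   variable with name n and type A.  Bound variables are de Bruijn indices,
   so terms are identified up to renaming of bound variables.  A term of the
   paper is an element of [tm [] A]. *)
Inductive tm : list ty -> ty -> Type :=
| cst {G} : tm G Top
| fvar {G} (n : nat) (A : ty) : tm G A
| bvar {G A} : var G A -> tm G A
| lam {G A B} : tm (A :: G) B -> tm G (Arr A B)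
| app {G A B} : tm G (Arr A B) -> tm G A -> tm G B
| pair {G A B} : tm G A -> tm G B -> tm G (Prod A B)
| p1 {G A B} : tm G (Prod A B) -> tm G A
| p2 {G A B} : tm G (Prod A B) -> tm G B.

Definition up_ren {G D : list ty} {B : ty}
  (r : forall A, var G A -> var D A) : forall A, var (B :: G) A -> var (B :: D) A :=
  fun A x =>
    match x in var L A0
      return match L with
             | [] => unit
             | C :: G' => (forall A1, var G' A1 -> var D A1) -> var (C :: D) A0
             end
    with
    | ZZ => fun _ => ZZ
    | SS y => fun r' => SS (r' _ y)
    end r.

Fixpoint ren {G D : list ty} (r : forall A, var G A -> var D A) {A : ty}
  (t : tm G A) {struct t} : tm D A :=
  match t in tm G0 A0 return (forall A1, var G0 A1 -> var D A1) -> tm D A0 with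
  | cst => fun _ => cst
  | fvar n B => fun _ => fvar n B
  | bvar x => fun r => bvar (r _ x)
  | lam u => fun r => lam (ren (up_ren r) u)
  | app u v => fun r => app (ren r u) (ren r v)
  | pair u v => fun r => pair (ren r u) (ren r v)
  | p1 u => fun r => p1 (ren r u)
  | p2 u => fun r => p2 (ren r u)
  end r.

Definition wk {G : list ty} (B : ty) {A : ty} (t : tm G A) : tm (B :: G) A :=
  ren (fun A0 (x : var G A0) => @SS G A0 B x) t.

Definition up_sub {G D : list ty} {B : ty}
  (s : forall A, var G A -> tm D A) : forall A, var (B :: G) A -> tm (B :: D) A :=
  fun A x =>
    match x in var L A0
      return match L with
             | [] => unit
             | C :: G' => (forall A1, var G' A1 -> tm D A1) -> tm (C :: D) A0
             end
    with
    | ZZ => fun _ => bvar ZZ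
    | SS y => fun s' => wk _ (s' _ y)
    end s.

Fixpoint subst {G D : list ty} (s : forall A, var G A -> tm D A) {A : ty}
  (t : tm G A) {struct t} : tm D A :=
  match t in tm G0 A0 return (forall A1, var G0 A1 -> tm D A1) -> tm D A0 with
  | cst => fun _ => cst
  | fvar n B => fun _ => fvar n B
  | bvar x => fun s => s _ x
  | lam u => fun s => lam (subst (up_sub s) u)
  | app u v => fun s => app (subst s u) (subst s v)
  | pair u v => fun s => pair (subst s u) (subst s v)
  | p1 u => fun s => p1 (subst s u)
  | p2 u => fun s => p2 (subst s u)
  end s.

Definition sub1 {G : list ty} {B : ty} (v : tm G B) : forall A, var (B :: G) A -> tm G A :=
  fun A x =>
    match x in var L A0
      return match L with
             | [] => unit
             | C :: G' => tm G' C -> tm G' A0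
             end
    with
    | ZZ => fun v' => v'
    | SS y => fun _ => bvar y
    end v.

Definition subst1 {G : list ty} {A B : ty} (u : tm (A :: G) B) (v : tm G A) : tm G B :=
  subst (sub1 v) u.

(* Iso(Top), and the canonical term *^tau:  [star tau G = Some s] iff
   tau is in Iso(Top) and s is *^tau (in the binder context G);
   [star tau G = None] iff tau is not in Iso(Top). *)
Fixpoint star (A : ty) : forall G : list ty, option (tm G A) :=
  match A return forall G, option (tm G A) with
  | Top => fun G => Some cst
  | TV _ => fun _ => None
  | Arr A1 B1 => fun G =>
      match star B1 (A1 :: G) with
      | Some s => Some (lam s)
      | None => None
      end
  | Prod A1 B1 => fun G =>
      match star A1 G, star B1 G with
      | Some a, Some b => Some (pair a b)
      | _, _ => None
      end
  end.

Inductive IsoTop : ty -> Prop :=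
| iso_top : IsoTop Top
| iso_arr A B : IsoTop B -> IsoTop (Arr A B)
| iso_prod A B : IsoTop A -> IsoTop B -> IsoTop (Prod A B).

Inductive step : forall {G : list ty} {A : ty}, tm G A -> tm G A -> Prop :=
| s_beta {G A B} (u : tm (A :: G) B) (v : tm G A) :
    step (app (lam u) v) (subst1 u v)
| s_pi1 {G A B} (u : tm G A) (v : tm G B) : step (p1 (pair u v)) u
| s_pi2 {G A B} (u : tm G A) (v : tm G B) : step (p2 (pair u v)) v
| s_eta {G A B} (t : tm G (Arr A B)) :
    step (lam (app (wk A t) (bvar ZZ))) t
| s_sp {G A B} (u : tm G (Prod A B)) : step (pair (p1 u) (p2 u)) u
| s_gentop {G A} (u s : tm G A) :
    IsoTop A -> star A G = Some s -> u <> s -> step u s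
| s_etatop {G A B} (t : tm G (Arr A B)) (s : tm (A :: G) A) :
    IsoTop A -> star A (A :: G) = Some s -> step (lam (app (wk A t) s)) t
| s_sptop1 {G A B} (u : tm G (Prod A B)) (s : tm G B) :
    IsoTop B -> star B G = Some s -> step (pair (p1 u) s) u
| s_sptop2 {G A B} (u : tm G (Prod A B)) (s : tm G A) :
    IsoTop A -> star A G = Some s -> step (pair s (p2 u)) u
| c_lam {G A B} (u u' : tm (A :: G) B) : step u u' -> step (lam u) (lam u')
| c_app1 {G A B} (u u' : tm G (Arr A B)) (v : tm G A) :
    step u u' -> step (app u v) (app u' v)
| c_app2 {G A B} (u : tm G (Arr A B)) (v v' : tm G A) :
    step v v' -> step (app u v) (app u v')
| c_pair1 {G A B} (u u' : tm G A) (v : tm G B) :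
    step u u' -> step (pair u v) (pair u' v)
| c_pair2 {G A B} (u : tm G A) (v v' : tm G B) :
    step v v' -> step (pair u v) (pair u v')
| c_p1 {G A B} (u u' : tm G (Prod A B)) : step u u' -> step (p1 u) (p1 u')
| c_p2 {G A B} (u u' : tm G (Prod A B)) : step u u' -> step (p2 u) (p2 u').

Definition steps {G : list ty} {A : ty} : tm G A -> tm G A -> Prop :=
  clos_refl_trans (tm G A) (@step G A).

Definition SN {G : list ty} {A : ty} (t : tm G A) : Prop :=
  ~ exists f : nat -> tm G A, f 0 = t /\ forall k, step (f k) (f (S k)).

Fixpoint red (A : ty) : tm [] A -> Prop :=
  match A return tm [] A -> Prop with
  | Top => fun t => SN t
  | TV _ => fun t => SN t
  | Arr A1 B1 => fun t => forall u : tm [] A1, red A1 u -> red B1 (app t u)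
  | Prod A1 B1 => fun t => red A1 (p1 t) /\ red B1 (p2 t)
  end.

(* t[*^Top := z^Top], with z the free variable named n of type Top *)
Fixpoint repl (n : nat) {G : list ty} {A : ty} (t : tm G A) {struct t} : tm G A :=
  match t in tm G0 A0 return tm G0 A0 with
  | cst => fvar n Top
  | fvar m B => fvar m B
  | bvar x => bvar x
  | lam u => lam (repl n u)
  | app u v => app (repl n u) (repl n v)
  | pair u v => pair (repl n u) (repl n v)
  | p1 u => p1 (repl n u)
  | p2 u => p2 (repl n u)
  end.

Fixpoint occurs (n : nat) {G : list ty} {A : ty} (t : tm G A) {struct t} : Prop :=
  match t with
  | cst => False
  | fvar m B => m = n /\ B = Top
  | bvar _ => False
  | lam u => occurs n u
  | app u v => occurs n u \/ occurs n v
  | pair u v => occurs n u \/ occurs n v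
  | p1 u => occurs n u
  | p2 u => occurs n u
  end.

(* Let [erase n] be the map that collapses the free variable
   z^Top (named n) back to the constant *^Top.  Then:
   - [t] reduces to [erase n t], and [repl n t] reduces to [t] (each z^Top
     and each inserted z^Top is a gentop redex), which gives part (b);
   - [erase n (repl n t) = erase n t];
   - simulation: every step [s -> s'] either induces a step
     [erase n s -> erase n s'], or leaves the erasure unchanged while
     strictly decreasing the number of occurrences of z^Top (a gentop step
     on a subterm whose erasure already is the canonical term *^tau).
   By a lexicographic induction (SN of the erasure, then the occurrence
   count), any term whose erasure is SN is SN; hence SN transfers between
   terms with the same erasure, and so does reducibility, by induction on
   the type.  Parts (a) and (c) follow since [repl n t] and [t] have the
   same erasure. *)
From Pilot Require Import Defs.
From Stdlib Require Import List Relations.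
Import ListNotations.
From Stdlib Require Import Arith Lia Classical ClassicalEpsilon Program.Equality.
(* [Defs.app] (term application) must shadow [List.app]. *)
Import Defs.

(* Strong normalization as accessibility of the converse step relation;
   it agrees with [SN] (classically, using dependent choice). *)
Definition SNa {G A} (t : tm G A) : Prop := Acc (fun a b => step b a) t.

Lemma SN_of_SNa {G A} (t : tm G A) : SNa t -> SN t.
Proof.
  intros Hacc. induction Hacc as [t _ IH]. intros [f [Hf0 Hf]].
  apply (IH (f 1)).
  - rewrite <- Hf0. apply Hf.
  - exists (fun k => f (S k)). split; auto.
Qed.

Lemma not_SNa_step {G A} (t : tm G A) :
  ~ SNa t -> exists t', step t t' /\ ~ SNa t'.
Proof.
  intros Hnot. apply NNPP. intros Hall. apply Hnot. constructor.
  intros t' Hstep. apply NNPP. intros Ht'. apply Hall. eauto.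
Qed.

Lemma SNa_of_SN {G A} (t : tm G A) : SN t -> SNa t.
Proof.
  intros Hsn. apply NNPP. intros Hnot. apply Hsn.
  assert (next : forall x : {x : tm G A | ~ SNa x},
             {y : {x : tm G A | ~ SNa x} | step (proj1_sig x) (proj1_sig y)}).
  { intros [x Hx]. apply constructive_indefinite_description.
    destruct (not_SNa_step x Hx) as [y [Hxy Hy]].
    exists (exist _ y Hy). exact Hxy. }
  pose (chain := fix chain (k : nat) : {x : tm G A | ~ SNa x} :=
          match k with 0 => exist _ t Hnot | S k => proj1_sig (next (chain k)) end).
  exists (fun k => proj1_sig (chain k)). split; [reflexivity|].
  intro k. exact (proj2_sig (next (chain k))).
Qed.

Lemma steps_map {G A G' A'} (C : tm G A -> tm G' A') :
  (forall x y, step x y -> step (C x) (C y)) ->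
  forall x y, steps x y -> steps (C x) (C y).
Proof.
  intros HC x y Hxy.
  induction Hxy; [apply rt_step; auto | apply rt_refl | eapply rt_trans; eauto].
Qed.

Lemma steps_app {G A B} (u u' : tm G (Arr A B)) (v v' : tm G A) :
  steps u u' -> steps v v' -> steps (app u v) (app u' v').
Proof.
  intros Hu Hv. apply rt_trans with (app u' v).
  - exact (steps_map (fun x => app x v) (fun x y => c_app1 x y v) _ _ Hu).
  - exact (steps_map (app u') (c_app2 u') _ _ Hv).
Qed.

Lemma steps_pair {G A B} (u u' : tm G A) (v v' : tm G B) :
  steps u u' -> steps v v' -> steps (pair u v) (pair u' v').
Proof.
  intros Hu Hv. apply rt_trans with (pair u' v).
  - exact (steps_map (fun x => pair x v) (fun x y => c_pair1 x y v) _ _ Hu).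
  - exact (steps_map (pair u') (c_pair2 u') _ _ Hv).
Qed.

Lemma steps_lam {G A B} (u u' : tm (A :: G) B) : steps u u' -> steps (lam u) (lam u').
Proof. apply (steps_map lam c_lam). Qed.

Lemma steps_p1 {G A B} (u u' : tm G (Prod A B)) : steps u u' -> steps (p1 u) (p1 u').
Proof. apply (steps_map p1 c_p1). Qed.

Lemma steps_p2 {G A B} (u u' : tm G (Prod A B)) : steps u u' -> steps (p2 u) (p2 u').
Proof. apply (steps_map p2 c_p2). Qed.

Lemma SN_step {G A} (t t' : tm G A) : SN t -> step t t' -> SN t'.
Proof.
  intros Hsn Hstep [f [Hf0 Hf]]. apply Hsn.
  exists (fun k => match k with 0 => t | S k => f k end). split; [reflexivity|].
  intros [|k]; [rewrite Hf0; exact Hstep | exact (Hf k)].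
Qed.

Lemma SN_steps {G A} (t t' : tm G A) : steps t t' -> SN t -> SN t'.
Proof. intros Hsteps. induction Hsteps; eauto using SN_step. Qed.

Lemma step_fvar_top {G} (n : nat) : @step G Top (fvar n Top) cst.
Proof. eapply s_gentop; [constructor | reflexivity | discriminate]. Qed.

Lemma steps_repl (n : nat) {G A} (t : tm G A) : steps (repl n t) t.
Proof.
  induction t; simpl; try apply rt_refl; auto using steps_lam, steps_app, steps_pair,
    steps_p1, steps_p2.
  apply rt_step, step_fvar_top.
Qed.

Definition erase_fvar (n m : nat) {G} (B : ty) : tm G B :=
  match B as B0 return tm G B0 with
  | Top => if Nat.eqb m n then cst else fvar m Top
  | TV k => fvar m (TV k)
  | Arr B1 B2 => fvar m (Arr B1 B2)
  | Prod B1 B2 => fvar m (Prod B1 B2)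
  end.

Fixpoint erase (n : nat) {G A} (t : tm G A) {struct t} : tm G A :=
  match t in tm G0 A0 return tm G0 A0 with
  | cst => cst
  | fvar m B => erase_fvar n m B
  | bvar x => bvar x
  | lam u => lam (erase n u)
  | app u v => app (erase n u) (erase n v)
  | pair u v => pair (erase n u) (erase n v)
  | p1 u => p1 (erase n u)
  | p2 u => p2 (erase n u)
  end.

Definition count_fvar (n m : nat) (B : ty) : nat :=
  match B with Top => if Nat.eqb m n then 1 else 0 | _ => 0 end.

Fixpoint count (n : nat) {G A} (t : tm G A) {struct t} : nat :=
  match t with
  | cst => 0
  | fvar m B => count_fvar n m B
  | bvar _ => 0
  | lam u => count n u
  | app u v => count n u + count n v
  | pair u v => count n u + count n v
  | p1 u => count n u
  | p2 u => count n u
  end.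

Lemma erase_repl (n : nat) {G A} (t : tm G A) : erase n (repl n t) = erase n t.
Proof.
  induction t; simpl; try rewrite ?IHt, ?IHt1, ?IHt2; try reflexivity.
  rewrite Nat.eqb_refl. reflexivity.
Qed.

Lemma steps_erase (n : nat) {G A} (t : tm G A) : steps t (erase n t).
Proof.
  induction t; simpl; try apply rt_refl; auto using steps_lam, steps_app, steps_pair,
    steps_p1, steps_p2.
  destruct A; simpl; try apply rt_refl.
  destruct (Nat.eqb n0 n); [apply rt_step, step_fvar_top | apply rt_refl].
Qed.

Lemma erase_count0 (n : nat) {G A} (t : tm G A) : count n t = 0 -> erase n t = t.
Proof.
  induction t; simpl; intros H0;
    try rewrite IHt by lia; try rewrite IHt1, IHt2 by lia; try reflexivity.
  destruct A; simpl in *; try reflexivity.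
  destruct (Nat.eqb n0 n); [discriminate | reflexivity].
Qed.

Lemma erase_ren (n : nat) {G A} (t : tm G A) :
  forall D (r : forall A, var G A -> var D A), erase n (ren r t) = ren r (erase n t).
Proof.
  induction t; intros; simpl; try rewrite ?IHt, ?IHt1, ?IHt2; try reflexivity.
  destruct A; simpl; try reflexivity. destruct (Nat.eqb n0 n); reflexivity.
Qed.

Lemma subst_ext {G A} (t : tm G A) :
  forall D (s s' : forall A, var G A -> tm D A),
  (forall A x, s A x = s' A x) -> subst s t = subst s' t.
Proof.
  induction t; intros D s s' Hss'; simpl; f_equal; auto.
  apply IHt. intros A0 x. dependent destruction x; simpl; [reflexivity | now rewrite Hss'].
Qed.

Lemma erase_subst (n : nat) {G A} (t : tm G A) :
  forall D (s : forall A, var G A -> tm D A),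
  erase n (subst s t) = subst (fun A x => erase n (s A x)) (erase n t).
Proof.
  induction t; intros; simpl; try rewrite ?IHt, ?IHt1, ?IHt2; try reflexivity.
  - destruct A; simpl; try reflexivity. destruct (Nat.eqb n0 n); reflexivity.
  - f_equal. apply subst_ext. intros A0 x.
    dependent destruction x; simpl; [reflexivity | apply erase_ren].
Qed.

Lemma erase_subst1 (n : nat) {G A B} (u : tm (A :: G) B) (v : tm G A) :
  erase n (subst1 u v) = subst1 (erase n u) (erase n v).
Proof.
  unfold subst1. rewrite erase_subst. apply subst_ext.
  intros A0 x. dependent destruction x; reflexivity.
Qed.

Lemma star_no_fvar (n : nat) (A : ty) :
  forall G s, star A G = Some s -> erase n s = s /\ count n s = 0.
Proof.
  induction A; simpl; intros G s Hstar.
  - injection Hstar as <-. auto.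
  - discriminate.
  - destruct (star A2 (A1 :: G)) eqn:E; [|discriminate].
    injection Hstar as <-. destruct (IHA2 _ _ E) as [He Hc]. simpl. rewrite He. auto.
  - destruct (star A1 G) eqn:E1; [|discriminate].
    destruct (star A2 G) eqn:E2; [|discriminate].
    injection Hstar as <-.
    destruct (IHA1 _ _ E1) as [He1 Hc1], (IHA2 _ _ E2) as [He2 Hc2].
    simpl. rewrite He1, He2. split; [reflexivity | lia].
Qed.

Definition erase_simulates (n : nat) {G A} (s s' : tm G A) : Prop :=
  step (erase n s) (erase n s') \/
  (erase n s = erase n s' /\ count n s' < count n s).

Lemma erase_simulates_context (n : nat) {G A G' A'} (C C' : tm G A -> tm G' A') :
  (forall x y, step x y -> step (C' x) (C' y)) ->
  (forall x, erase n (C x) = C' (erase n x)) ->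
  (forall x y, count n y < count n x -> count n (C y) < count n (C x)) ->
  forall s s', erase_simulates n s s' -> erase_simulates n (C s) (C s').
Proof.
  intros HC' Herase Hcount s s' [Hstep | [Heq Hlt]]; unfold erase_simulates;
    rewrite !Herase; [left; auto | right; rewrite Heq; auto].
Qed.

(* A gentop step whose erasure is trivial removes an occurrence of z^Top:
   otherwise the redex would already be the canonical term. *)
Lemma gentop_simulates (n : nat) {G A} (u s : tm G A) :
  IsoTop A -> star A G = Some s -> u <> s -> erase_simulates n u s.
Proof.
  intros Hiso Hstar Hne. destruct (star_no_fvar n _ _ _ Hstar) as [Hes Hcs].
  unfold erase_simulates. rewrite Hes, Hcs.
  destruct (classic (erase n u = s)) as [Heq | Hneq].
  - right. split; [exact Heq |].
    destruct (count n u) eqn:Hcu; [| lia].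
    exfalso. apply Hne. rewrite <- (erase_count0 n u Hcu). exact Heq.
  - left. eapply s_gentop; eauto.
Qed.

Lemma step_erase_simulates (n : nat) {G A} (s s' : tm G A) :
  step s s' -> erase_simulates n s s'.
Proof.
  intros Hstep. induction Hstep.
  - left. simpl. rewrite erase_subst1. apply s_beta.
  - left. apply s_pi1.
  - left. apply s_pi2.
  - left. simpl. unfold wk. rewrite erase_ren. exact (s_eta _).
  - left. apply s_sp.
  - now apply gentop_simulates.
  - left. destruct (star_no_fvar n _ _ _ H0) as [Hes _].
    simpl. unfold wk. rewrite erase_ren, Hes. eapply s_etatop; eauto.
  - left. destruct (star_no_fvar n _ _ _ H0) as [Hes _].
    simpl. rewrite Hes. eapply s_sptop1; eauto.
  - left. destruct (star_no_fvar n _ _ _ H0) as [Hes _].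
    simpl. rewrite Hes. eapply s_sptop2; eauto.
  - apply (erase_simulates_context n lam lam); auto using c_lam.
  - apply (erase_simulates_context n (fun x => app x v) (fun x => app x (erase n v)));
      auto using c_app1; simpl; lia.
  - apply (erase_simulates_context n (app u) (app (erase n u))); auto using c_app2;
      simpl; lia.
  - apply (erase_simulates_context n (fun x => pair x v) (fun x => pair x (erase n v)));
      auto using c_pair1; simpl; lia.
  - apply (erase_simulates_context n (pair u) (pair (erase n u))); auto using c_pair2;
      simpl; lia.
  - apply (erase_simulates_context n p1 p1); auto using c_p1.
  - apply (erase_simulates_context n p2 p2); auto using c_p2.
Qed.

(* A term is SN as soon as its erasure is: lexicographic induction on the
   erasure (by SN) and on the number of occurrences of z^Top. *)
Lemma SNa_of_erase (n : nat) {G A} (e : tm G A) :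
  SNa e -> forall s, erase n s = e -> SNa s.
Proof.
  intros He. induction He as [e _ IHe]. intros s.
  remember (count n s) as c. revert s Heqc.
  induction c as [c IHc] using (well_founded_induction lt_wf).
  intros s Hc Hs. constructor. intros s' Hstep.
  destruct (step_erase_simulates n s s' Hstep) as [Hestep | [Heq Hlt]].
  - apply (IHe (erase n s')); [subst e; exact Hestep | reflexivity].
  - apply (IHc (count n s')); [lia | reflexivity | congruence].
Qed.

Lemma SN_transfer (n : nat) {G A} (s t : tm G A) :
  erase n s = erase n t -> SN t -> SN s.
Proof.
  intros Heq Ht. apply SN_of_SNa, (SNa_of_erase n (erase n t)); auto.
  apply SNa_of_SN. exact (SN_steps _ _ (steps_erase n t) Ht).
Qed.

Lemma red_transfer (n : nat) (A : ty) :
  forall s t : tm [] A, erase n s = erase n t -> red A t -> red A s.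
Proof.
  induction A; simpl; intros s t Heq Ht.
  - exact (SN_transfer n s t Heq Ht).
  - exact (SN_transfer n s t Heq Ht).
  - intros u Hu. apply (IHA2 (app s u) (app t u)); [simpl; now rewrite Heq | auto].
  - destruct Ht as [Ht1 Ht2]. split.
    + apply (IHA1 (p1 s) (p1 t)); [simpl; now rewrite Heq | auto].
    + apply (IHA2 (p2 s) (p2 t)); [simpl; now rewrite Heq | auto].
Qed.

Theorem mainTheorem8 (A : ty) (t : tm [] A) (n : nat) :
  ~ occurs n t ->
  (red A t -> red A (repl n t)) /\
  steps (repl n t) t /\
  (atomic A -> SN t -> SN (repl n t)).
Proof.
  intros _. split; [| split].
  - apply (red_transfer n), erase_repl.
  - apply steps_repl.
  - intros _. apply (SN_transfer n), erase_repl.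
Qed.
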